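(* The following identities of formal power series hold: $$(1,1,52,q)=(1,1,6,q^9)+P_{3,1}(1,1,6,q),\qquad (8,7,8,q)=(1,1,6,q^9)+P_{3,2}(1,1,6,q),$$ $$(4,1,13,q)=(2,1,3,q^9)+P_{3,1}(2,1,3,q),\qquad (2,1,26,q)=(2,1,3,q^9)+P_{3,2}(2,1,3,q).$$
   Context: For integers $A,B,C$ with $A>0$ and $B^2-4AC<0$, $(A,B,C,q):=\sum_{(x,y)\in\mathbb Z^2}q^{Ax^2+Bxy+Cy^2}$, and $(A,B,C,q^k)$ is this series with $q\mapsto q^k$. For $m\ge1$, $0\le r<m$: $P_{m,r}\sum_{n\ge0}a(n)q^n=\sum_{n\ge0}a(mn+r)q^{mn+r}$. *)

From mathcomp Require Import all_boot all_order all_algebra.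
Set Implicit Arguments. Unset Strict Implicit. Unset Printing Implicit Defensive.
Import Order.TTheory GRing.Theory Num.Theory.
Local Open Scope ring_scope.

Definition fps := nat -> nat.

Definition qform (A B C x y : int) : int := A * x ^+ 2 + B * x * y + C * y ^+ 2.

(* Search bound for representations of n: if A > 0 and B^2 - 4AC < 0 then
   4A*Q(x,y) = (2Ax+By)^2 + (4AC-B^2) y^2 >= y^2 and similarly 4C*Q >= x^2,
   so every (x,y) with Q(x,y) = n satisfies |x|,|y| <= 4(|A|+|C|) n. *)
Definition rep_bound (A C : int) (n : nat) : nat :=
  (4 * (`|A|%N + `|C|%N) * n)%N.

(* coefficient of q^n in (A,B,C,q) = #{(x,y) in Z^2 | Q(x,y) = n} *)
Definition theta (A B C : int) : fps := fun n =>
  let M := rep_bound A C n in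
  (\sum_(i < (2 * M).+1) \sum_(j < (2 * M).+1)
     (qform A B C (i%:Z - M%:Z) (j%:Z - M%:Z) == n%:Z))%N.

Definition dilate (k : nat) (f : fps) : fps := fun n =>
  if (k %| n)%N then f (n %/ k)%N else 0%N.

Definition Pmr (m r : nat) (f : fps) : fps := fun n =>
  if (n %% m == r)%N then f n else 0%N.

Definition fps_add (f g : fps) : fps := fun n => (f n + g n)%N.

From mathcomp Require Import all_boot all_order all_algebra.
From mathcomp Require Import zify ring.
From Stdlib Require Import FunctionalExtensionality.

(* The forms (1,1,52), (8,7,8) and (4,1,13), (2,1,26), of discriminant -207,
   are the restrictions of (1,1,6), resp. (2,1,3), of discriminant -23 to
   index-3 sublattices L = {(x,y) | 3 | a x + b y}: a change of variables maps
   Z^2 bijectively onto L and pulls the small form back to the big one.  So the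
   coefficient of q^n on the left counts the representations of n by the small
   form that lie in L.  Reducing modulo 3 (a check on the nine residue pairs)
   shows that a representation (x,y) of n lies in L iff n = r (mod 3) or
   3 | x, y.  The former are counted by P_{3,r}; the latter are 3 times the
   representations of n/9. *)

Set Implicit Arguments.
Unset Strict Implicit.
Unset Printing Implicit Defensive.
Import Order.TTheory GRing.Theory Num.Theory.
Local Open Scope ring_scope.

Lemma size_count_bij (T1 T2 : eqType) (s1 : seq T1) (s2 : seq T2)
    (f : T1 -> T2) (g : T2 -> T1) (P : pred T2) :
  uniq s1 -> uniq s2 -> cancel f g -> {in P, cancel g f} ->
  (forall x, P (f x)) -> (forall x, (f x \in s2) = (x \in s1)) ->
  size s1 = count P s2.
Proof.
move=> s1_uniq s2_uniq fK gK Pf mem_f.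
rewrite -size_filter -(size_map f); apply/perm_size/uniq_perm.
- by rewrite map_inj_uniq //; exact: can_inj fK.
- exact: filter_uniq.
move=> y; rewrite mem_filter; apply/mapP/andP => [[x x_s1 ->]|[Py y_s2]].
  by rewrite Pf mem_f.
by exists (g y); rewrite -?mem_f gK.
Qed.

Lemma ler_abs_sqrD (D s u : int) : 0 < D -> `|u| <= s ^+ 2 + D * u ^+ 2.
Proof.
move=> D_gt0; apply: le_trans (_ : `|u| <= u ^+ 2) _; first nia.
by rewrite -[leLHS]add0r lerD ?sqr_ge0 // ler_peMl ?sqr_ge0 // -gtz0_ge1.
Qed.

Definition box (M : nat) : seq (int * int) :=
  [seq (i%:Z - M%:Z, j%:Z - M%:Z) | i <- iota 0 (2 * M).+1, j <- iota 0 (2 * M).+1].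

Lemma box_uniq M : uniq (box M).
Proof.
apply: allpairs_uniq; rewrite ?iota_uniq //.
by move=> [a b] [c d] _ _ /= [] ? ?; congr pair; lia.
Qed.

Lemma mem_box M p :
  (p \in box M) = (- M%:Z <= p.1 <= M%:Z) && (- M%:Z <= p.2 <= M%:Z).
Proof.
apply/allpairsP/idP => [[[i j] [ri rj ->]]|].
  by move: ri rj; rewrite !mem_iota /=; lia.
case: p => x y bound_xy; exists (absz (x + M%:Z), absz (y + M%:Z)).
rewrite !mem_iota /= in bound_xy *.
split; [lia | lia | congr pair; lia].
Qed.

Definition sublattice (d : nat) (a b : int) : pred (int * int) :=
  [pred p | (d %| a * p.1 + b * p.2)%Z].

Section QuadraticForm.

Variables A B C : int.

Definition reps (n : nat) : seq (int * int) :=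
  [seq p <- box (rep_bound A C n) | qform A B C p.1 p.2 == n%:Z].

Lemma theta_size_reps n : theta A B C n = size (reps n).
Proof.
rewrite /reps size_filter; set M := rep_bound A C n.
pose F (i j : nat) : nat := qform A B C (i%:Z - M%:Z) (j%:Z - M%:Z) == n%:Z.
have -> : theta A B C n = (\sum_(i < (2 * M).+1) \sum_(j < (2 * M).+1) F i j)%N by [].
rewrite -(big_mkord xpredT (fun i => \sum_(j < (2 * M).+1) F i j)%N).
rewrite -sum1_count /box /allpairs big_flatten big_map /index_iota subn0.
apply: eq_bigr => i _; rewrite -(big_mkord xpredT (F i)) /index_iota subn0 big_map big_mkcond.
by apply: eq_bigr => j _; rewrite /F; case: (_ == _).
Qed.

Lemma reps_uniq n : uniq (reps n).
Proof. exact/filter_uniq/box_uniq. Qed.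

Lemma qformZ x y c : qform A B C (x * c) (y * c) = qform A B C x y * c ^+ 2.
Proof. by rewrite /qform; ring. Qed.

Lemma dvdz_qform d x y :
  (d %| x)%Z -> (d %| y)%Z -> (d ^+ 2 %| qform A B C x y)%Z.
Proof. by move=> /dvdzP[x' ->] /dvdzP[y' ->]; rewrite qformZ dvdz_mull. Qed.

Lemma qform_congr d x y x' y' : (x == x' %[mod d])%Z -> (y == y' %[mod d])%Z ->
  (qform A B C x y == qform A B C x' y' %[mod d])%Z.
Proof.
rewrite !eqz_mod_dvd => dx dy.
have -> : qform A B C x y - qform A B C x' y' =
    (x - x') * (A * (x + x') + B * y) + (y - y') * (B * x' + C * (y + y')).
  by rewrite /qform; ring.
by rewrite rpredD // dvdz_mulr.
Qed.

Definition sublattice_residue_check (d : nat) (a b : int) (r : nat) : bool :=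
  all (fun i => all (fun j =>
      sublattice d a b (i%:Z, j%:Z) ==
      ((qform A B C i j %% d)%Z == r%:Z) || (i == 0)%N && (j == 0)%N)
    (iota 0 d)) (iota 0 d).

Lemma sublattice_by_residues d a b r : (0 < d)%N ->
  sublattice_residue_check d a b r ->
  forall p, sublattice d a b p =
    ((qform A B C p.1 p.2 %% d)%Z == r%:Z) || (d %| p.1)%Z && (d %| p.2)%Z.
Proof.
move=> d_gt0 /allP residue_test [x y] /=.
have residue z : exists2 i, (i < d)%N & (d %| z - i%:Z)%Z.
  exists (absz (z %% d)%Z); first lia.
  rewrite gez0_abs ?modz_ge0 //; last lia.
  by rewrite {1}(divz_eq z d) addrK dvdz_mull.
have dvdz_small i : (i < d)%N -> (d %| i%:Z)%Z = (i == 0)%N.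
  by case: i => [|i] i_lt; rewrite ?dvdz0 // dvdzE /= gtn_eqF // gtnNdvd.
have [i i_lt x_i] := residue x; have [j j_lt y_j] := residue y.
have i_mem : i \in iota 0 d by rewrite mem_iota.
have j_mem : j \in iota 0 d by rewrite mem_iota.
have dvd_x : (d %| x)%Z = (i == 0)%N.
  by rewrite -dvdz_small // -[x](subrK i%:Z) (rpredDl _ x_i).
have dvd_y : (d %| y)%Z = (j == 0)%N.
  by rewrite -dvdz_small // -[y](subrK j%:Z) (rpredDl _ y_j).
have /eqP -> : (qform A B C x y == qform A B C i j %[mod d])%Z.
  by apply: qform_congr; rewrite eqz_mod_dvd.
have /eqP := allP (residue_test i i_mem) j j_mem.
rewrite dvd_x dvd_y => <-; rewrite /sublattice /=.
have -> : a * x + b * y = (a * i%:Z + b * j%:Z) + (a * (x - i%:Z) + b * (y - j%:Z)).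
  by ring.
by rewrite rpredDr // rpredD // dvdz_mull.
Qed.

Hypothesis A_gt0 : 0 < A.
Hypothesis disc_lt0 : B ^+ 2 < 4 * A * C.

Lemma qform_rep_bound x y n : qform A B C x y = n%:Z ->
  `|x| <= (rep_bound A C n)%:Z /\ `|y| <= (rep_bound A C n)%:Z.
Proof.
rewrite /rep_bound => Qn.
have D_gt0 : 0 < 4 * A * C - B ^+ 2 by rewrite subr_gt0.
have C_gt0 : 0 < C by have := sqr_ge0 B; nia.
have y_le : `|y| <= 4 * A * n%:Z.
  rewrite -Qn (_ : 4 * A * _ =
    (2 * A * x + B * y) ^+ 2 + (4 * A * C - B ^+ 2) * y ^+ 2) ?ler_abs_sqrD //.
  by rewrite /qform; ring.
have x_le : `|x| <= 4 * C * n%:Z.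
  rewrite -Qn (_ : 4 * C * _ =
    (B * x + 2 * C * y) ^+ 2 + (4 * A * C - B ^+ 2) * x ^+ 2) ?ler_abs_sqrD //.
  by rewrite /qform; ring.
split; lia.
Qed.

Lemma mem_reps n p : (p \in reps n) = (qform A B C p.1 p.2 == n%:Z).
Proof.
rewrite mem_filter mem_box.
case: eqP => //= /qform_rep_bound[bound_x bound_y].
by rewrite -!ler_norml bound_x bound_y.
Qed.

Lemma count_reps_dvdz d n : (0 < d)%N ->
  count (fun p => (d %| p.1)%Z && (d %| p.2)%Z) (reps n) =
  dilate (d ^ 2) (theta A B C) n.
Proof.
move=> d_gt0; rewrite /dilate; case: ifPn => [/dvdnP[k ->]|not_dvd].
  rewrite mulnK ?expn_gt0 ?d_gt0 // theta_size_reps; symmetry.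
  apply: (size_count_bij (f := fun p => (p.1 * d%:Z, p.2 * d%:Z))
                         (g := fun p => ((p.1 %/ d)%Z, (p.2 %/ d)%Z))).
  - exact: reps_uniq.
  - exact: reps_uniq.
  - by move=> [x y] /=; rewrite !mulzK //; lia.
  - by move=> [x y] /andP[/= dx dy]; rewrite !divzK.
  - by move=> p; rewrite /= !dvdz_mull.
  move=> p; rewrite !mem_reps /= qformZ PoszM -[Posz (d ^ 2)]/(d%:Z ^+ 2).
  by rewrite (inj_eq (mulIf _)) // expf_neq0 //; lia.
apply/eqP; rewrite -leqn0 leqNgt -has_count; apply/hasPn => p.
rewrite mem_reps => /eqP Qn; apply/negP => /andP[dx dy].
by move: (dvdz_qform dx dy); rewrite Qn dvdzE abszX (negPf not_dvd).
Qed.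

Lemma count_reps_modz (d r n : nat) :
  count (fun p => (qform A B C p.1 p.2 %% d)%Z == r%:Z) (reps n) =
  Pmr d r (theta A B C) n.
Proof.
rewrite /Pmr theta_size_reps (eq_in_count (a2 := fun=> (n %% d == r)%N)).
  by case: (n %% d == r)%N; [exact: count_predT | exact: count_pred0].
by move=> p; rewrite mem_reps => /eqP ->; rewrite modz_nat eqz_nat.
Qed.

Lemma count_reps_modz_or_dvdz d r n : (0 < r < d)%N ->
  count (fun p => ((qform A B C p.1 p.2 %% d)%Z == r%:Z) ||
                  (d %| p.1)%Z && (d %| p.2)%Z) (reps n) =
  fps_add (dilate (d ^ 2) (theta A B C)) (Pmr d r (theta A B C)) n.
Proof.
move=> r_bounds; rewrite /fps_add addnC -count_reps_dvdz; last lia.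
rewrite -count_reps_modz -count_predUI.
have -> : count (predI (fun p => (qform A B C p.1 p.2 %% d)%Z == r%:Z)
                       (fun p => (d %| p.1)%Z && (d %| p.2)%Z)) (reps n) = 0%N.
  apply/eqP; rewrite -leqn0 leqNgt -has_count; apply/hasPn => p _ /=.
  apply/negP => /andP[/eqP Qr /andP[dx dy]].
  have /dvdz_mod0P : (d %| qform A B C p.1 p.2)%Z.
    by apply: dvdz_trans (dvdz_qform dx dy); rewrite dvdz_mulr.
  rewrite Qr; lia.
by rewrite addn0.
Qed.

End QuadraticForm.

Lemma theta_eq_count_image A B C A' B' C' (f g : int * int -> int * int)
    (P : pred (int * int)) n :
  0 < A -> B ^+ 2 < 4 * A * C -> 0 < A' -> B' ^+ 2 < 4 * A' * C' ->
  (forall p, qform A B C (f p).1 (f p).2 = qform A' B' C' p.1 p.2) ->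
  cancel f g -> {in P, cancel g f} -> (forall p, P (f p)) ->
  theta A' B' C' n = count P (reps A B C n).
Proof.
move=> A_gt0 disc_lt0 A'_gt0 disc'_lt0 qform_f fK gK Pf; rewrite theta_size_reps.
apply: size_count_bij fK gK Pf _; rewrite ?reps_uniq // => p.
by rewrite !mem_reps // qform_f.
Qed.

Lemma theta_sublattice_decomposition A B C A' B' C' (f g : int * int -> int * int)
    (d : nat) (a b : int) (r : nat) :
  0 < A -> B ^+ 2 < 4 * A * C -> 0 < A' -> B' ^+ 2 < 4 * A' * C' ->
  (0 < r < d)%N -> sublattice_residue_check A B C d a b r ->
  (forall p, qform A B C (f p).1 (f p).2 = qform A' B' C' p.1 p.2) ->
  cancel f g -> {in sublattice d a b, cancel g f} ->
  (forall p, sublattice d a b (f p)) ->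
  theta A' B' C' = fps_add (dilate (d ^ 2) (theta A B C)) (Pmr d r (theta A B C)).
Proof.
move=> A_gt0 disc_lt0 A'_gt0 disc'_lt0 r_bounds residue_check qform_f fK gK image_f.
apply: functional_extensionality => n.
rewrite (theta_eq_count_image n A_gt0 disc_lt0 A'_gt0 disc'_lt0 qform_f fK gK image_f).
rewrite -count_reps_modz_or_dvdz //.
by apply: eq_count; apply: sublattice_by_residues; first lia.
Qed.

Lemma theta_1_1_52 :
  theta 1 1 52 = fps_add (dilate 9 (theta 1 1 6)) (Pmr 3 1 (theta 1 1 6)).
Proof.
apply: (theta_sublattice_decomposition (d := 3) (a := 0) (b := 1)
          (f := fun p => (p.1 - p.2, 3 * p.2))
          (g := fun p => (p.1 + (p.2 %/ 3)%Z, (p.2 %/ 3)%Z))) => //.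
- by move=> [x y]; rewrite /qform /=; ring.
- by move=> [x y] /=; congr pair; lia.
- by move=> [x y]; rewrite inE /= => ?; congr pair; lia.
- by move=> [x y]; rewrite /sublattice /=; lia.
Qed.

Lemma theta_8_7_8 :
  theta 8 7 8 = fps_add (dilate 9 (theta 1 1 6)) (Pmr 3 2 (theta 1 1 6)).
Proof.
apply: (theta_sublattice_decomposition (d := 3) (a := 1) (b := -1)
          (f := fun p => (- 2 * p.1 + p.2, p.1 + p.2))
          (g := fun p => (((p.2 - p.1) %/ 3)%Z, p.2 - ((p.2 - p.1) %/ 3)%Z))) => //.
- by move=> [x y]; rewrite /qform /=; ring.
- by move=> [x y] /=; congr pair; lia.
- by move=> [x y]; rewrite inE /= => ?; congr pair; lia.
- by move=> [x y]; rewrite /sublattice /=; lia.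
Qed.

Lemma theta_4_1_13 :
  theta 4 1 13 = fps_add (dilate 9 (theta 2 1 3)) (Pmr 3 1 (theta 2 1 3)).
Proof.
apply: (theta_sublattice_decomposition (d := 3) (a := 1) (b := 1)
          (f := fun p => (- p.1 - 2 * p.2, p.1 - p.2))
          (g := fun p => (p.2 - ((p.1 + p.2) %/ 3)%Z, - ((p.1 + p.2) %/ 3)%Z))) => //.
- by move=> [x y]; rewrite /qform /=; ring.
- by move=> [x y] /=; congr pair; lia.
- by move=> [x y]; rewrite inE /= => ?; congr pair; lia.
- by move=> [x y]; rewrite /sublattice /=; lia.
Qed.

Lemma theta_2_1_26 :
  theta 2 1 26 = fps_add (dilate 9 (theta 2 1 3)) (Pmr 3 2 (theta 2 1 3)).
Proof.
apply: (theta_sublattice_decomposition (d := 3) (a := 0) (b := 1)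
          (f := fun p => (- p.1 - p.2, 3 * p.2))
          (g := fun p => (- p.1 - (p.2 %/ 3)%Z, (p.2 %/ 3)%Z))) => //.
- by move=> [x y]; rewrite /qform /=; ring.
- by move=> [x y] /=; congr pair; lia.
- by move=> [x y]; rewrite inE /= => ?; congr pair; lia.
- by move=> [x y]; rewrite /sublattice /=; lia.
Qed.

Theorem mainTheorem6 :
  theta 1 1 52 = fps_add (dilate 9 (theta 1 1 6)) (Pmr 3 1 (theta 1 1 6)) /\
  theta 8 7 8  = fps_add (dilate 9 (theta 1 1 6)) (Pmr 3 2 (theta 1 1 6)) /\
  theta 4 1 13 = fps_add (dilate 9 (theta 2 1 3)) (Pmr 3 1 (theta 2 1 3)) /\
  theta 2 1 26 = fps_add (dilate 9 (theta 2 1 3)) (Pmr 3 2 (theta 2 1 3)).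
Proof. exact: (conj theta_1_1_52 (conj theta_8_7_8 (conj theta_4_1_13 theta_2_1_26))). Qed.
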